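(* Let $p,q\in\mathbf{R}_+^n$, $K_0\in\mathbf{R}_+$, $w\in\mathbf{R}_{++}^n$ and $K=(K_1,\dots,K_n)$ with $K_i\in\mathbf{R}_+$, such that $0\le p_i<q_i\le p_i+K_i$ for $i=1,\dots,n$. Consider the problem \[ \begin{array}{ll} \mbox{minimize} & \mathbf{E}_{\pi}(w^{T}x-K_0)_+ \\ \mbox{subject to} & \mathbf{E}_{\pi}(x_i)=q_i,\\ & \mathbf{E}_{\pi}(x_i-K_i)_+=p_i,\quad i=1,\dots,n, \end{array} \] over all probability measures $\pi$ supported on $\mathbf{R}_+^n$. Then the optimal value of this problem is bounded below by the optimal value $d^{\inf}$ of the program \[ \begin{array}{lll} d^{\inf}= & \displaystyle\sup_{\lambda,\mu,h,\alpha_0,\dots,\alpha_n} & \lambda^{T}p+\mu^{T}(q-K)+h \\ & \text{subject to} & \lambda+\mu\le w, \\ & & h\le \alpha_0(w^{T}K-K_0)-(\alpha_0w-\mu)_+^{T}K,\quad 0\le\alpha_0\le 1, \\ & & h\le \alpha_i(w^{T}K-K_0)-\sum_{j\ne i}(\alpha_iw_j-\mu_j)_+K_j,\quad i=1,\dots,n,\\ & & (\lambda_i+\mu_i)_+/w_i\le\alpha_i\le 1,\quad i=1,\dots,n, \end{array} \] in the variables $\lambda,\mu\in\mathbf{R}^n$, $h\in\mathbf{R}$, $\alpha_0,\dots,\alpha_n\in\mathbf{R}$, which can be written as a linear program of size polynomial (linear) in $n$.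
   Context: $(y)_+=\max(y,0)$, applied componentwise to vectors. $\mathbf{R}_{++}^n$ denotes vectors with strictly positive components. *)

From HB Require Import structures.
From mathcomp Require Import all_boot all_order all_algebra.
From mathcomp Require Import all_classical all_reals all_analysis.
Set Implicit Arguments. Unset Strict Implicit. Unset Printing Implicit Defensive.
Import Order.TTheory GRing.Theory Num.Theory.
Local Open Scope ring_scope.

Definition pospart (R : realType) (y : R) : R := Num.max y 0.

From HB Require Import structures.
From mathcomp Require Import all_boot all_order all_algebra.
From mathcomp Require Import all_classical all_reals all_analysis.
From mathcomp Require Import measurable_realfun.
From mathcomp Require Import ring lra.
Set Implicit Arguments. Unset Strict Implicit. Unset Printing Implicit Defensive.
Import Order.TTheory GRing.Theory Num.Theory.
Local Open Scope classical_set_scope.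
Local Open Scope ring_scope.

(* Weak duality.  For dual-feasible (lam, mu, h, a0, a) the payoff
   lam^T (x - K)_+ + mu^T (x - K) + h lies below (w^T x - K0)_+ on the
   nonnegative orthant; integrating against a feasible pi gives
   lam^T p + mu^T (q - K) + h <= E_pi (w^T x - K0)_+.
   For the pointwise bound, compare each leg with al * w_i * (x_i - K_i) for a
   level al in [0, 1]: a leg with x_i <= K_i exceeds it by at most
   (al * w_i - mu_i)_+ * K_i, and a leg with x_i > K_i not at all once
   lam_i + mu_i <= al * w_i.  Take al = a0 if no x_i exceeds its strike, and
   otherwise al = a_k for the in-the-money k with the largest a_k (then
   lam_j + mu_j <= a_j * w_j <= a_k * w_j for every in-the-money j).  The
   constraints on h absorb the remaining excess, and al * y <= (y)_+. *)

Section PosPart.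
Variable R : realType.
Implicit Types l m al y wj Kj xj : R.

Lemma pospart_ge0 y : 0 <= pospart y.
Proof. by rewrite /pospart le_max lexx orbT. Qed.

Lemma le_pospart y : y <= pospart y.
Proof. by rewrite /pospart le_max lexx. Qed.

Lemma ger0_pospart y : 0 <= y -> pospart y = y.
Proof. by move=> y0; rewrite /pospart max_l. Qed.

Lemma ler0_pospart y : y <= 0 -> pospart y = 0.
Proof. by move=> y0; rewrite /pospart max_r. Qed.

Lemma le_pospart_scale al y : 0 <= al <= 1 -> al * y <= pospart y.
Proof.
case/andP=> al0 al1; have [y0|y0] := leP 0 y.
  by rewrite ger0_pospart //; exact: ler_piMl.
by rewrite ler0_pospart ?(ltW y0) //; exact: mulr_ge0_le0 al0 (ltW y0).
Qed.

Definition hedge_excess l m al wj Kj xj :=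
  l * pospart (xj - Kj) + m * (xj - Kj) - al * wj * (xj - Kj).

Lemma hedge_excess_below l m al wj Kj xj : 0 <= xj <= Kj ->
  hedge_excess l m al wj Kj xj <= pospart (al * wj - m) * Kj.
Proof.
case/andP=> x0 xK; rewrite /hedge_excess ler0_pospart ?subr_le0 // mulr0 add0r.
have -> : m * (xj - Kj) - al * wj * (xj - Kj) = (al * wj - m) * (Kj - xj) by ring.
have [c0|c0] := leP 0 (al * wj - m).
  by rewrite ger0_pospart // ler_wpM2l // lerBlDr lerDl.
rewrite ler0_pospart ?(ltW c0) // mul0r.
by apply: mulr_le0_ge0; rewrite ?subr_ge0 // ltW.
Qed.

Lemma hedge_excess_above l m al wj Kj xj : Kj < xj -> l + m <= al * wj ->
  hedge_excess l m al wj Kj xj <= 0.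
Proof.
move=> xK lm; rewrite /hedge_excess ger0_pospart ?subr_ge0 ?(ltW xK) //.
have -> : l * (xj - Kj) + m * (xj - Kj) - al * wj * (xj - Kj)
        = (l + m - al * wj) * (xj - Kj) by ring.
by apply: mulr_le0_ge0; rewrite ?subr_le0 ?subr_ge0 // ltW.
Qed.

End PosPart.

Definition dual_payoff (R : realType) (n : nat) (lam mu K : 'I_n -> R) (h : R)
    (x : 'I_n -> R) : R :=
  \sum_(i < n) lam i * pospart (x i - K i) + \sum_(i < n) mu i * (x i - K i) + h.

Lemma dual_payoffE (R : realType) (n : nat) (w : 'I_n -> R) (K0 al : R)
    (lam mu K : 'I_n -> R) (h : R) (x : 'I_n -> R) :
  dual_payoff lam mu K h x =
    \sum_(j < n) hedge_excess (lam j) (mu j) al (w j) (K j) (x j)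
    + al * (\sum_(i < n) w i * x i - K0)
    - al * (\sum_(i < n) w i * K i - K0) + h.
Proof.
rewrite /dual_payoff /hedge_excess !big_split /= sumrN.
have -> : \sum_(i < n) al * w i * (x i - K i)
        = al * (\sum_(i < n) w i * x i - \sum_(i < n) w i * K i).
  by rewrite -sumrB mulr_sumr; apply: eq_bigr => i _; ring.
ring.
Qed.

Section DualFeasible.
Variables (R : realType) (n : nat) (w K lam mu a : 'I_n -> R) (K0 h a0 : R).
Hypothesis hw : forall i, 0 < w i.
Hypothesis hK : forall i, 0 <= K i.
Hypothesis ha0 : 0 <= a0 <= 1.
Hypothesis ha0h : h <= a0 * (\sum_(j < n) w j * K j - K0)
                       - \sum_(j < n) pospart (a0 * w j - mu j) * K j.
Hypothesis hai : forall i, h <= a i * (\sum_(j < n) w j * K j - K0)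
                       - \sum_(j < n | j != i) pospart (a i * w j - mu j) * K j.
Hypothesis ha : forall i, pospart (lam i + mu i) / w i <= a i <= 1.

Lemma lam_mu_le_alpha_w i : lam i + mu i <= a i * w i.
Proof.
have /andP[+ _] := ha i; rewrite ler_pdivrMr //; apply: le_trans.
exact: le_pospart.
Qed.

Lemma alpha_ge0 i : 0 <= a i.
Proof.
have /andP[+ _] := ha i; apply: le_trans.
by apply: divr_ge0; [exact: pospart_ge0 | exact: ltW].
Qed.

Lemma dual_payoff_le_all_below (x : 'I_n -> R) :
  (forall i, 0 <= x i <= K i) ->
  dual_payoff lam mu K h x <= pospart (\sum_(i < n) w i * x i - K0).
Proof.
move=> xK; rewrite (dual_payoffE w K0 a0).
have hedge : \sum_j hedge_excess (lam j) (mu j) a0 (w j) (K j) (x j)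
           <= \sum_(j < n) pospart (a0 * w j - mu j) * K j.
  by apply: ler_sum => j _; exact: hedge_excess_below.
have := le_pospart_scale (\sum_(i < n) w i * x i - K0) ha0.
move: ha0h hedge; lra.
Qed.

Lemma dual_payoff_le_some_above (x : 'I_n -> R) k :
    (forall i, 0 <= x i) -> K k < x k -> (forall j, K j < x j -> a j <= a k) ->
  dual_payoff lam mu K h x <= pospart (\sum_(i < n) w i * x i - K0).
Proof.
move=> x0 xKk kmax; rewrite (dual_payoffE w K0 (a k)).
have hedge : \sum_j hedge_excess (lam j) (mu j) (a k) (w j) (K j) (x j)
           <= \sum_(j < n | j != k) pospart (a k * w j - mu j) * K j.
  rewrite (bigD1 k) //= -[leRHS]add0r; apply: lerD.
    by apply: hedge_excess_above => //; exact: lam_mu_le_alpha_w.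
  apply: ler_sum => j _; have [xKj|xKj] := leP (x j) (K j).
    by apply: hedge_excess_below; rewrite x0.
  apply: le_trans (hedge_excess_above xKj _) _.
    apply: le_trans (lam_mu_le_alpha_w j) _.
    by apply: ler_wpM2r; [exact: ltW | exact: kmax].
  by apply: mulr_ge0; [exact: pospart_ge0 | exact: hK].
have ak01 : 0 <= a k <= 1 by rewrite alpha_ge0 (andP (ha k)).2.
have := le_pospart_scale (\sum_(i < n) w i * x i - K0) ak01.
move: (hai k) hedge; lra.
Qed.

Lemma dual_payoff_le (x : 'I_n -> R) : (forall i, 0 <= x i) ->
  dual_payoff lam mu K h x <= pospart (\sum_(i < n) w i * x i - K0).
Proof.
move=> x0; have [[i0 xKi0]|all_below] := pselect (exists i, K i < x i).
  case: (arg_maxP a (P := fun i => K i < x i) xKi0) => k xKk kmax.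
  exact: (dual_payoff_le_some_above x0 xKk).
apply: dual_payoff_le_all_below => i; rewrite x0 /= leNgt.
by apply/negP => xKi; apply: all_below; exists i.
Qed.

End DualFeasible.

Section Expectation.
Local Open Scope ereal_scope.
Context d (T : measurableType d) (R : realType) (P : probability T R).

Definition has_expectation (f : T -> R) (r : R) :=
  P.-integrable setT (EFin \o f) /\ \int[P]_x (f x)%:E = r%:E.

Lemma has_expectation_cst (c : R) : has_expectation (fun=> c) c.
Proof.
split; first exact: finite_measure_integrable_cst.
by rewrite integral_cst // -[RHS]mule1; congr (_ * _); exact: probability_setT.
Qed.

Lemma has_expectationD (f g : T -> R) (r s : R) :
  has_expectation f r -> has_expectation g s ->
  has_expectation (fun x => f x + g x)%R (r + s)%R.
Proof.
move=> [intf ef] [ig eg]; have ifg := integrableD measurableT intf ig.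
split; first by [].
by under eq_integral do rewrite EFinD; rewrite integralD // ef eg.
Qed.

Lemma has_expectationZ (c : R) (f : T -> R) (r : R) : has_expectation f r ->
  has_expectation (fun x => c * f x)%R (c * r)%R.
Proof.
move=> [intf ef]; have icf := integrableZl measurableT c intf.
split; first by [].
by under eq_integral do rewrite EFinM; rewrite integralZl // ef.
Qed.

Lemma has_expectation_sum m (f : 'I_m -> T -> R) (r : 'I_m -> R) :
    (forall i, has_expectation (f i) (r i)) ->
  has_expectation (fun x => \sum_(i < m) f i x)%R (\sum_(i < m) r i)%R.
Proof.
move=> hf; rewrite -fct_sumE; elim/big_rec2: _ => [|i g s _ hgs].
  exact: has_expectation_cst.
exact: has_expectationD.
Qed.

Variables (S : set T) (mS : measurable S).
Hypothesis PS1 : P S = 1.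

Lemma integral_full_set (F : T -> \bar R) : measurable_fun setT F ->
  \int[P]_x F x = \int[P]_(x in S) F x.
Proof.
move=> mF; have mSC : measurable (~` S) by exact: measurableC.
have PSC : P (~` S) = 0 by rewrite probability_setC // PS1 subee.
rewrite integralE [RHS]integralE.
rewrite (ge0_negligible_integral _ _ _ _ PSC) //; last exact: measurable_funepos.
rewrite [X in _ - X](ge0_negligible_integral _ _ _ _ PSC) //;
  last exact: measurable_funeneg.
by rewrite setTD setCK.
Qed.

Lemma has_expectation_ge0 (f : T -> R) (r : R) : measurable_fun setT f ->
  (forall x, S x -> 0 <= f x)%R -> \int[P]_x (f x)%:E = r%:E ->
  has_expectation f r.
Proof.
move=> mf f0 ef.
have mEf : measurable_fun setT (EFin \o f) by exact/measurable_EFinP.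
split=> //; apply/integrableP; split=> //.
rewrite integral_full_set; last exact: measurableT_comp.
rewrite (eq_integral (fun x => (f x)%:E)); last first.
  by move=> x /set_mem Sx /=; rewrite ger0_norm // f0.
by rewrite -integral_full_set // ef ltry.
Qed.

Lemma has_expectation_le_integral (f g : T -> R) (r : R) :
  has_expectation f r -> measurable_fun setT g -> (forall x, 0 <= g x)%R ->
  (forall x, S x -> f x <= g x)%R ->
  r%:E <= \int[P]_x (g x)%:E.
Proof.
move=> [intf <-] mg g0 fg.
have [->|gfin] := eqVneq (\int[P]_x (g x)%:E) +oo; first exact: leey.
have ig : P.-integrable setT (EFin \o g).
  apply/integrableP; split; first exact/measurable_EFinP.
  under eq_integral do rewrite /= ger0_norm ?g0 //.
  by rewrite ltey.
rewrite integral_full_set; last exact: measurable_int intf.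
rewrite integral_full_set; last exact/measurable_EFinP.
apply: le_integral => //.
- exact: integrableS measurableT _ (@subsetT _ _) intf.
- exact: integrableS measurableT _ (@subsetT _ _) ig.
- by move=> x /set_mem Sx; rewrite lee_fin fg.
Qed.

End Expectation.

Lemma measurable_pospart d (T : measurableType d) (R : realType) (f : T -> R) :
  measurable_fun setT f -> measurable_fun setT (fun x => pospart (f x)).
Proof. by move=> mf; apply: measurable_maxr => //; exact: measurable_cst. Qed.

Lemma measurable_orthant (R : realType) (n : nat) :
  measurable [set x : n.-tuple R | forall i, 0 <= tnth x i].
Proof.
have -> : [set x : n.-tuple R | forall i, 0 <= tnth x i]
        = \bigcap_(i in [set: 'I_n])
            ((fun x : n.-tuple R => tnth x i) @^-1` `[0, +oo[%classic).
  apply/seteqP; split => x /= x0 i; first by rewrite /= in_itv /= andbT x0.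
  by have := x0 i I; rewrite /= in_itv /= andbT.
apply: fin_bigcap_measurable; first exact: finite_finset.
by move=> i _; rewrite -[X in measurable X]setTI; exact: measurable_tnth.
Qed.

Section PrimalMoments.
Variables (R : realType) (n : nat) (p q K : 'I_n -> R).
Variable pi : probability (n.-tuple R) R.
Hypothesis piS : pi [set x : n.-tuple R | forall i, 0 <= tnth x i] = 1%E.
Hypothesis hX : forall i, (\int[pi]_x (tnth x i)%:E)%E = (q i)%:E.
Hypothesis hP : forall i, (\int[pi]_x (pospart (tnth x i - K i))%:E)%E = (p i)%:E.

Lemma has_expectation_dual_payoff lam mu h :
  has_expectation pi (fun x => dual_payoff lam mu K h (tnth x))
    (\sum_(i < n) lam i * p i + \sum_(i < n) mu i * (q i - K i) + h).
Proof.
have EX i : has_expectation pi (fun x => tnth x i) (q i).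
  exact: (has_expectation_ge0 (@measurable_orthant R n) piS (measurable_tnth i)
            (fun x x0 => x0 i) (hX i)).
have EP i : has_expectation pi (fun x => pospart (tnth x i - K i)) (p i).
  have mP := measurable_pospart (measurable_funB (measurable_tnth i)
                                   (measurable_cst (K i))).
  exact: (has_expectation_ge0 (@measurable_orthant R n) piS mP
            (fun x _ => pospart_ge0 _) (hP i)).
apply: has_expectationD; last exact: has_expectation_cst.
apply: has_expectationD; apply: has_expectation_sum => i; apply: has_expectationZ.
  exact: EP.
by apply: has_expectationD; [exact: EX | exact: has_expectation_cst].
Qed.

End PrimalMoments.

Theorem proposition5 (R : realType) (n : nat)
  (p q K w : 'I_n -> R) (K0 : R)
  (hp : forall i, 0 <= p i) (hq : forall i, 0 <= q i)
  (hK : forall i, 0 <= K i) (hw : forall i, 0 < w i) (hK0 : 0 <= K0)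
  (hpq : forall i, p i < q i) (hqK : forall i, q i <= p i + K i) :
  let wK := \sum_(j < n) w j * K j in
  let dinf := ereal_sup
     [set z | exists (lam mu a : 'I_n -> R) (h a0 : R),
        [/\ (forall i, lam i + mu i <= w i),
            h <= a0 * (wK - K0) - \sum_(j < n) pospart (a0 * w j - mu j) * K j,
            0 <= a0 <= 1,
            (forall i, h <= a i * (wK - K0)
                          - \sum_(j < n | j != i) pospart (a i * w j - mu j) * K j) &
            (forall i, pospart (lam i + mu i) / w i <= a i <= 1)] /\
        z = (\sum_(i < n) lam i * p i + \sum_(i < n) mu i * (q i - K i) + h)%:E] in
  let primal_value := ereal_inf
     [set z | exists pi : probability (n.-tuple R) R,
        [/\ pi [set x : n.-tuple R | forall i, 0 <= tnth x i] = 1%E,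
            (forall i, (\int[pi]_x (tnth x i)%:E)%E = (q i)%:E) &
            (forall i, (\int[pi]_x (pospart (tnth x i - K i))%:E)%E = (p i)%:E)] /\
        z = (\int[pi]_x (pospart (\sum_(i < n) w i * tnth x i - K0))%:E)%E] in
  (dinf <= primal_value)%E.
Proof.
cbv zeta.
apply: ge_ereal_sup => _ [lam [mu [a [h [a0 [[_ ha0h ha0 hai ha] ->]]]]]].
apply: le_ereal_inf_tmp => _ [pi [[piS hX hP] ->]].
apply: (has_expectation_le_integral (@measurable_orthant R n) piS
          (has_expectation_dual_payoff piS hX hP lam mu h)).
- apply: measurable_pospart; apply: measurable_funB; last exact: measurable_cst.
  apply: measurable_sum => i; apply: measurable_funM; first exact: measurable_cst.
  exact: measurable_tnth.
- by move=> x; exact: pospart_ge0.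
- by move=> x x0; exact: (dual_payoff_le hw hK ha0 ha0h hai ha).
Qed.
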